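(* In the virtually-$\mathbb{Z}$ setting described in the context, let $\Phi:A^G\to A^G$ be a cellular automaton with neighborhood $S$ and local map $\mu$, and let $\Delta=\max\{\mathrm{imp}(s):s\in S\}$. Let $V=V_{[a,b]}$ be a section with $l(V)\geq\Delta$ and let $u\in A^L$ be a $V$-blocking word. Then for all $x,y\in A^G$ with $x|_L=y|_L=u$ and $x|_{Br_+(V)}=y|_{Br_+(V)}$, one has $\Phi^t(x)|_{Br_+(V)}=\Phi^t(y)|_{Br_+(V)}$ for all $t\in\mathbb{N}$. Symmetrically, for all $x,y\in A^G$ with $x|_L=y|_L=u$ and $x|_{Br_-(V)}=y|_{Br_-(V)}$, one has $\Phi^t(x)|_{Br_-(V)}=\Phi^t(y)|_{Br_-(V)}$ for all $t\in\mathbb{N}$.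
   Context: $G$ is a finitely generated group, $A$ a finite alphabet, $H\leq G$ a subgroup of finite index and $\varphi:H\to\mathbb{Z}$ a group isomorphism. $F\subseteq G$ is a finite set with $1_G\in F$ containing exactly one element of each right coset $Hg$, so every $g\in G$ decomposes uniquely as $g=zf$ with $z\in H$, $f\in F$. Define $p:G\to\mathbb{Z}$ by $p(zf)=\varphi(z)$. For $X\subseteq\mathbb{Z}$, $V_X=p^{-1}(X)$; $V_{\{k\}}$ is the $k$-th vertebra; $V_X$ is a section if $X=[a,b]$ is a finite integer interval, with length $l(V_{[a,b]})=b-a+1$, right arm $Br_+(V_{[a,b]})=V_{(b,\infty)}$ and left arm $Br_-(V_{[a,b]})=V_{(-\infty,a)}$ (integer intervals). For $s\in G$, $\mathrm{imp}(s)=\max\{|p(gs)-p(g)|:g\in V_{\{k\}}\}$, which is independent of $k$. A cellular automaton $\Phi$ with neighborhood $S\subseteq G$ finite and local map $\mu:A^S\to A$ is $\Phi(x)(g)=\mu(s\mapsto x(gs))$. For finite $V\subseteq G$, a pattern $u\in A^L$ ($L\subseteq G$ finite) is $V$-blocking for $\Phi$ if for all $x,y\in A^G$ with $x|_L=y|_L=u$ one has $\Phi^t(x)|_V=\Phi^t(y)|_V$ for all $t\in\mathbb{N}$. *)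

From Stdlib Require Import ZArith List.
Set Implicit Arguments.
Open Scope Z_scope.

Section Defs.
Variable G : Type.
Variables (mul : G -> G -> G) (one : G) (inv : G -> G).

Definition is_group : Prop :=
  (forall a b c, mul a (mul b c) = mul (mul a b) c) /\
  (forall a, mul one a = a) /\ (forall a, mul a one = a) /\
  (forall a, mul (inv a) a = one) /\ (forall a, mul a (inv a) = one).

Inductive gen_by (gens : list G) : G -> Prop :=
| gen_one : gen_by gens one
| gen_in : forall g, In g gens -> gen_by gens g
| gen_mul : forall g h, gen_by gens g -> gen_by gens h -> gen_by gens (mul g h)
| gen_inv : forall g, gen_by gens g -> gen_by gens (inv g).

Definition finitely_generated : Prop :=
  exists gens : list G, forall g, gen_by gens g.

Definition is_subgroup (H : G -> Prop) : Prop :=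
  H one /\ (forall a b, H a -> H b -> H (mul a b)) /\ (forall a, H a -> H (inv a)).

Definition is_iso_to_Z (H : G -> Prop) (phi : G -> Z) : Prop :=
  (forall a b, H a -> H b -> phi (mul a b) = phi a + phi b) /\
  (forall a b, H a -> H b -> phi a = phi b -> a = b) /\
  (forall k, exists a, H a /\ phi a = k).

(* F contains 1 and exactly one element of each right coset H g
   (f is in H g iff f g^-1 is in H) *)
Definition right_transversal (H : G -> Prop) (F : list G) : Prop :=
  In one F /\
  forall g, exists f, (In f F /\ H (mul f (inv g))) /\
     forall f', In f' F /\ H (mul f' (inv g)) -> f' = f.

Definition is_projection (H : G -> Prop) (phi : G -> Z) (F : list G)
  (p : G -> Z) : Prop :=
  forall z f, H z -> In f F -> p (mul z f) = phi z.

Definition Vset (p : G -> Z) (X : Z -> Prop) : G -> Prop := fun g => X (p g).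
Definition section (p : G -> Z) (a b : Z) : G -> Prop :=
  Vset p (fun k => a <= k <= b).
Definition length_section (a b : Z) : Z := b - a + 1.
Definition right_arm (p : G -> Z) (b : Z) : G -> Prop := Vset p (fun k => b < k).
Definition left_arm (p : G -> Z) (a : Z) : G -> Prop := Vset p (fun k => k < a).

Definition imp_is (p : G -> Z) (s : G) (m : Z) : Prop :=
  (exists g, p g = 0 /\ Z.abs (p (mul g s) - p g) = m) /\
  (forall g, p g = 0 -> Z.abs (p (mul g s) - p g) <= m).

Definition Delta_is (p : G -> Z) (S : list G) (D : Z) : Prop :=
  (exists s, In s S /\ imp_is p s D) /\
  (forall s m, In s S -> imp_is p s m -> m <= D).

Variable A : Type.

Definition CA (S : list G) (mu : ({s : G | In s S} -> A) -> A)
  (x : G -> A) : G -> A :=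
  fun g => mu (fun s => x (mul g (proj1_sig s))).

Definition agrees (L : list G) (u : {g : G | In g L} -> A) (x : G -> A) : Prop :=
  forall g (h : In g L), x g = u (exist _ g h).

Definition eq_on (V : G -> Prop) (x y : G -> A) : Prop :=
  forall g, V g -> x g = y g.

Definition blocking (Phi : (G -> A) -> (G -> A)) (V : G -> Prop)
  (L : list G) (u : {g : G | In g L} -> A) : Prop :=
  forall x y, agrees L u x -> agrees L u y ->
    forall t : nat, eq_on V (Nat.iter t Phi x) (Nat.iter t Phi y).

End Defs.
Arguments agrees {G A} L u x.
Arguments blocking {G A} Phi V L u.
Arguments CA {G} mul {A} S mu x.

(* The displacement |p(gs) - p(g)| depends only on the coset representative
   of g, so it is bounded by imp(s) everywhere, hence by Delta for s in S.
   A cell of an arm therefore only sees cells of the same arm or of the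
   section V (which is at least Delta long, so it cannot be jumped over).
   Cells of V evolve identically because u is V-blocking, and an induction
   on t shows that agreement on the arm persists. *)
From Stdlib Require Import ZArith List Lia FunctionalExtensionality.
Open Scope Z_scope.

Lemma In_argmax {T : Type} (v : T -> Z) (l : list T) (x0 : T) :
  In x0 l -> exists x, In x l /\ forall y, In y l -> v y <= v x.
Proof.
  revert x0; induction l as [|c l IH]; intros x0 Hx0; [destruct Hx0|].
  destruct l as [|d l'].
  - exists c; split; [left; auto|]. intros y [<-|[]]; lia.
  - destruct (IH d (or_introl eq_refl)) as [m [Hm Hmax]].
    destruct (Z_le_gt_dec (v c) (v m)).
    + exists m; split; [right; auto|]. intros y [<-|Hy]; auto.
    + exists c; split; [left; auto|]. intros y [<-|Hy]; [lia|].
      specialize (Hmax y Hy); lia.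
Qed.

Section CellularAutomaton.

Context {G : Type} {mul : G -> G -> G} {A : Type}.
Context {S : list G} {mu : ({s : G | In s S} -> A) -> A}.

Lemma CA_eq_at (x y : G -> A) (g : G) :
  (forall s, In s S -> x (mul g s) = y (mul g s)) ->
  CA mul S mu x g = CA mul S mu y g.
Proof.
  intros Hxy. unfold CA. f_equal. apply functional_extensionality.
  intros [s Hs]. apply Hxy; exact Hs.
Qed.

Lemma eq_on_iter_CA_blocking {V W : G -> Prop} {L : list G}
    {u : {g : G | In g L} -> A} :
  blocking (CA mul S mu) V L u ->
  (forall g s, W g -> In s S -> V (mul g s) \/ W (mul g s)) ->
  forall x y, agrees L u x -> agrees L u y -> eq_on W x y ->
  forall t : nat,
    eq_on W (Nat.iter t (CA mul S mu) x) (Nat.iter t (CA mul S mu) y).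
Proof.
  intros Hblock HW x y Hx Hy Hxy t.
  induction t as [|t IH]; [exact Hxy|].
  intros g Hg. simpl. apply CA_eq_at. intros s Hs.
  destruct (HW g s Hg Hs) as [HV | HWgs].
  - exact (Hblock x y Hx Hy t _ HV).
  - exact (IH _ HWgs).
Qed.

End CellularAutomaton.

Section VirtuallyZ.

Context {G : Type} {mul : G -> G -> G} {one : G} {inv : G -> G}.
Context {H : G -> Prop} {phi : G -> Z} {F : list G} {p : G -> Z}.

Hypothesis Hgrp : is_group mul one inv.
Hypothesis Hsub : is_subgroup mul one inv H.
Hypothesis Hphi_add : forall a b, H a -> H b -> phi (mul a b) = phi a + phi b.
Hypothesis HF : right_transversal mul one inv H F.
Hypothesis Hp : is_projection mul H phi F p.

Lemma phi_one : phi one = 0.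
Proof.
  destruct Hgrp as [_ [Hl1 _]]. destruct Hsub as [Hone _].
  pose proof (Hphi_add one one Hone Hone) as E. rewrite Hl1 in E. lia.
Qed.

Lemma phi_inv (z : G) : H z -> phi (inv z) = - phi z.
Proof.
  destruct Hgrp as [_ [_ [_ [Hinvl _]]]]. destruct Hsub as [_ [_ Hinv]].
  intros Hz. pose proof (Hphi_add (inv z) z (Hinv z Hz) Hz) as E.
  rewrite Hinvl, phi_one in E. lia.
Qed.

Lemma coset_decomposition (g : G) :
  exists z f, H z /\ In f F /\ g = mul z f.
Proof.
  destruct Hgrp as [Hassoc [Hl1 [Hr1 [Hinvl _]]]]. destruct Hsub as [_ [_ Hinv]].
  destruct HF as [_ HFg]. destruct (HFg g) as [f [[Hf Hw] _]].
  exists (inv (mul f (inv g))), f. split; [auto|split; [exact Hf|]].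
  assert (E : mul (mul f (inv g)) g = f).
  { rewrite <- Hassoc, Hinvl, Hr1. reflexivity. }
  rewrite <- E at 2. rewrite Hassoc, Hinvl, Hl1. reflexivity.
Qed.

Lemma p_transversal (f : G) : In f F -> p f = 0.
Proof.
  destruct Hgrp as [_ [Hl1 _]]. destruct Hsub as [Hone _].
  intros Hf. rewrite <- (Hl1 f), (Hp one f Hone Hf). exact phi_one.
Qed.

Lemma displacement_transversal (g s : G) :
  exists f, In f F /\ p (mul g s) - p g = p (mul f s) - p f.
Proof.
  destruct Hgrp as [Hassoc [Hl1 [_ [Hinvl _]]]]. destruct Hsub as [_ [Hmul Hinv]].
  destruct (coset_decomposition g) as [z [f [Hz [Hf Eg]]]].
  destruct (coset_decomposition (mul g s)) as [z' [f' [Hz' [Hf' Egs]]]].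
  exists f. split; [exact Hf|].
  assert (Efs : mul f s = mul (mul (inv z) z') f').
  { rewrite <- Hassoc, <- Egs, Eg, !Hassoc, Hinvl, Hl1. reflexivity. }
  rewrite Efs, (Hp _ _ (Hmul _ _ (Hinv z Hz) Hz') Hf'), Egs, Eg,
    (Hp _ _ Hz' Hf'), (Hp _ _ Hz Hf), (p_transversal f Hf),
    (Hphi_add _ _ (Hinv z Hz) Hz'), (phi_inv z Hz).
  lia.
Qed.

Lemma imp_exists (s : G) : exists m, imp_is mul p s m.
Proof.
  destruct HF as [HoneF _].
  destruct (In_argmax (fun f => Z.abs (p (mul f s) - p f)) F one HoneF)
    as [f0 [Hf0 Hmax]].
  exists (Z.abs (p (mul f0 s) - p f0)). split.
  - exists f0. split; [exact (p_transversal f0 Hf0)|reflexivity].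
  - intros g _. destruct (displacement_transversal g s) as [f [Hf ->]].
    exact (Hmax f Hf).
Qed.

Lemma displacement_le_imp (s : G) (m : Z) :
  imp_is mul p s m -> forall g, Z.abs (p (mul g s) - p g) <= m.
Proof.
  intros [_ Hle] g. destruct (displacement_transversal g s) as [f [Hf ->]].
  exact (Hle f (p_transversal f Hf)).
Qed.

Lemma displacement_le_Delta {S : list G} {D : Z} :
  Delta_is mul p S D ->
  forall s g, In s S -> Z.abs (p (mul g s) - p g) <= D.
Proof.
  intros [_ HDmax] s g Hs. destruct (imp_exists s) as [m Hm].
  pose proof (displacement_le_imp s m Hm g). pose proof (HDmax s m Hs Hm). lia.
Qed.

End VirtuallyZ.

Section Arms.

Context {G : Type} {mul : G -> G -> G} {p : G -> Z}.
Context {S : list G} {D a b : Z}.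

Hypothesis Hdisp : forall s g, In s S -> Z.abs (p (mul g s) - p g) <= D.
Hypothesis Hlen : length_section a b >= D.

Lemma right_arm_step (g s : G) :
  right_arm p b g -> In s S ->
  section p a b (mul g s) \/ right_arm p b (mul g s).
Proof.
  unfold right_arm, section, Vset, length_section in *.
  intros Hg Hs. pose proof (Hdisp s g Hs). lia.
Qed.

Lemma left_arm_step (g s : G) :
  left_arm p a g -> In s S ->
  section p a b (mul g s) \/ left_arm p a (mul g s).
Proof.
  unfold left_arm, section, Vset, length_section in *.
  intros Hg Hs. pose proof (Hdisp s g Hs). lia.
Qed.

End Arms.

Theorem lemma3 (G : Type) (mul : G -> G -> G) (one : G) (inv : G -> G)
  (A : Type) (H : G -> Prop) (phi : G -> Z) (F : list G) (p : G -> Z)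
  (Hgrp : is_group mul one inv)
  (Hfg : finitely_generated mul one inv)
  (Hsub : is_subgroup mul one inv H)
  (Hphi : is_iso_to_Z mul H phi)
  (HF : right_transversal mul one inv H F)
  (Hp : is_projection mul H phi F p)
  (S : list G) (mu : ({s : G | In s S} -> A) -> A)
  (D : Z) (HD : Delta_is mul p S D)
  (a b : Z) (Hlen : length_section a b >= D)
  (L : list G) (u : {g : G | In g L} -> A)
  (Hblock : blocking (CA mul S mu) (section p a b) L u) :
  (forall x y : G -> A, agrees L u x -> agrees L u y ->
     eq_on (right_arm p b) x y ->
     forall t : nat,
       eq_on (right_arm p b) (Nat.iter t (CA mul S mu) x) (Nat.iter t (CA mul S mu) y)) /\
  (forall x y : G -> A, agrees L u x -> agrees L u y ->
     eq_on (left_arm p a) x y ->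
     forall t : nat,
       eq_on (left_arm p a) (Nat.iter t (CA mul S mu) x) (Nat.iter t (CA mul S mu) y)).
Proof.
  destruct Hphi as [Hphi_add _].
  pose proof (displacement_le_Delta Hgrp Hsub Hphi_add HF Hp HD) as Hdisp.
  split; apply (eq_on_iter_CA_blocking Hblock).
  - exact (right_arm_step Hdisp Hlen).
  - exact (left_arm_step Hdisp Hlen).
Qed.
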